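(* Let $\tau>\sigma$ be coprime positive integers with $\tau-\sigma\not\equiv2\pmod4$, and let $\rho_0\neq0$. Set $a=\tau+\sigma$, $b=\tau-\sigma$, $x=b/a\in\,]0,1[$, $k=\mathrm{round}(1/(2x))$, $\mu=\frac{\pi}{2}-k\pi x$ and $s=\mu/x$. Let $u_{\mathrm{asy}}\in\,]-\pi/2,\pi/2[$ be the unique solution of $u+\tan u=s$, and define $$\theta_{\mathrm{asy}}=\frac{\pi}{b}+\frac{2}{a}\bigl(u_{\mathrm{asy}}-s\bigr).$$ Let $\theta_c$ be the unique solution of $\dot q(\theta)=0$ near the slow-mode node $\pi/b$, i.e. with $\frac a2\theta_c=k\pi+u_c$ for some $u_c\in\,]-\pi/2,\pi/2[$, where $$\dot q(\theta)=\rho_0\Bigl(\sqrt{\tfrac{\tau}{\sigma}}\cos(\tau\theta)+\sqrt{\tfrac{\sigma}{\tau}}\cos(\sigma\theta)\Bigr).$$ Then $$|\theta_c-\theta_{\mathrm{asy}}|\le\frac{\pi^3}{a}x^2=\pi^3\frac{(\tau-\sigma)^2}{(\tau+\sigma)^3}.$$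
   Context: $\mathrm{round}(\cdot)$ denotes rounding to the nearest integer. The function $\dot q(\theta)$ is the velocity of the impulse response of $\ddot q+n\dot z+q=0$, $\ddot z-n\dot q+z=0$ at the resonance $\Omega_1/\Omega_2=\tau/\sigma$, reparametrised by $\theta=t/\sqrt{\tau\sigma}$. It is not the $\theta$-derivative of a function $q$. *)

From Stdlib Require Import Reals Lra Lia Arith ZArith.
Open Scope R_scope.

(* round y = nearest integer to y, ties rounded up: floor (y + 1/2).
   Int_part is the floor function on R. *)
Definition round (y : R) : Z := Int_part (y + / 2).

(* velocity of the impulse response at resonance Omega1/Omega2 = tau/sigma,
   in the variable theta = t / sqrt(tau sigma). *)
Definition qdot (rho0 : R) (tau sigma : nat) (theta : R) : R :=
  rho0 * (sqrt (INR tau / INR sigma) * cos (INR tau * theta)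
          + sqrt (INR sigma / INR tau) * cos (INR sigma * theta)).

(* Write phi = (a/2) theta = k pi + u_c and w = mu - x u_c. Since tau and sigma
   are (a +- b)/2, the condition qdot = 0 becomes a cos phi cos(x phi)
   = b sin phi sin(x phi), and as x phi = pi/2 - w this says x tan u_c = tan w.
   Comparing with u_asy + tan u_asy = mu/x gives
     x ((u_c + tan u_c) - (u_asy + tan u_asy)) = tan w - w.
   The map u |-> u + tan u expands distances by at least 2, and
   |tan w - w| <= |w|^3 <= (pi x)^3 as long as |w| <= 11/10, so
   |u_c - u_asy| <= pi^3 x^2 / 2; finally theta_c - theta_asy = 2/a (u_c - u_asy).
   For x >= 12/25 the claimed bound already exceeds the trivial bound pi. *)

From Stdlib Require Import Reals Lra Lia Psatz.
Open Scope R_scope.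

Lemma PI_gt_3 : 3 < PI.
Proof. pose proof PI2_3_2. lra. Qed.

Lemma PI_lt_16_5 : PI < 16/5.
Proof.
  destruct (Rlt_or_le PI (16/5)) as [h|h]; [exact h|exfalso].
  destruct (cos_bound (8/5) 0) as [_ Hc]; try lra.
  unfold cos_approx, cos_term in Hc; simpl in Hc.
  assert (0 <= cos (8/5)) by (apply cos_ge_0; lra).
  lra.
Qed.

Lemma tan_sub_id_bounds w : 0 <= w <= 11/10 -> 0 <= tan w - w <= w ^ 3.
Proof.
  intros Hw. pose proof PI_gt_3.
  assert (Hc : 0 < cos w) by (apply cos_gt_0; lra).
  destruct (sin_bound w 0) as [Hs1 Hs2]; try lra.
  destruct (cos_bound w 0) as [Hc1 Hc2]; try lra.
  unfold sin_approx, sin_term, cos_approx, cos_term in *; simpl in *.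
  assert (Hw3 : 0 <= w ^ 3) by (apply pow_le; lra).
  (* sin is squeezed between w cos w and (w + w^3) cos w *)
  assert (Hlow : w * cos w <= sin w).
  { assert (w * cos w <= w * (1 - w^2/2 + w^4/24)) by (apply Rmult_le_compat_l; lra).
    assert (0 <= w ^ 3 * (1/3 - w^2/24)) by (apply Rmult_le_pos; nra).
    nra. }
  assert (Hup : sin w <= (w + w ^ 3) * cos w).
  { assert ((w + w^3) * (1 - w^2/2) <= (w + w^3) * cos w)
      by (apply Rmult_le_compat_l; lra).
    assert (0 <= w ^ 3 * (2/3 - 61 * w^2/120)) by (apply Rmult_le_pos; nra).
    nra. }
  replace (tan w - w) with ((sin w - w * cos w) / cos w) by (unfold tan; field; lra).
  split; apply Rmult_le_reg_r with (cos w); try lra;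
    unfold Rdiv; rewrite Rmult_assoc, Rinv_l; lra.
Qed.

Lemma Rabs_tan_sub_id w : Rabs w <= 11/10 -> Rabs (tan w - w) <= Rabs w ^ 3.
Proof.
  intros H. destruct (Rle_or_lt 0 w) as [h|h].
  - rewrite (Rabs_pos_eq w h) in *. pose proof (tan_sub_id_bounds w (conj h H)).
    rewrite Rabs_pos_eq; lra.
  - rewrite (Rabs_left w h) in *. pose proof (tan_sub_id_bounds (-w) ltac:(lra)) as Hn.
    rewrite tan_neg in Hn. rewrite Rabs_left1; [|nra].
    replace ((-w) ^ 3) with (- w ^ 3) in Hn by ring. lra.
Qed.

Lemma id_plus_tan_expand_le u v : - (PI/2) < u -> u <= v -> v < PI/2 ->
  2 * (v - u) <= (v + tan v) - (u + tan u).
Proof.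
  intros Hu Huv Hv. destruct (Req_dec u v) as [->|Hne]; [lra|].
  destruct (MVT_cor2 tan (fun c => 1 + tan c ^ 2) u v) as [c [Hc _]]; [lra| |].
  - intros c Hc. apply derive_pt_eq_1 with (derivable_pt_tan c ltac:(lra)).
    apply derive_pt_tan.
  - pose proof (pow2_ge_0 (tan c)). nra.
Qed.

Lemma id_plus_tan_expand u v : - (PI/2) < u < PI/2 -> - (PI/2) < v < PI/2 ->
  2 * Rabs (v - u) <= Rabs ((v + tan v) - (u + tan u)).
Proof.
  intros Hu Hv. destruct (Rle_or_lt u v) as [h|h].
  - pose proof (id_plus_tan_expand_le u v ltac:(lra) h ltac:(lra)).
    rewrite !Rabs_pos_eq; lra.
  - pose proof (id_plus_tan_expand_le v u ltac:(lra) ltac:(lra) ltac:(lra)).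
    rewrite (Rabs_minus_sym v u), (Rabs_minus_sym (v + tan v)), !Rabs_pos_eq; lra.
Qed.

Lemma root_error_le_cube x mu ua uc : 0 < x ->
  - (PI/2) < ua < PI/2 -> - (PI/2) < uc < PI/2 ->
  ua + tan ua = mu / x -> x * tan uc = tan (mu - x * uc) ->
  Rabs (mu - x * uc) <= 11/10 ->
  2 * x * Rabs (uc - ua) <= Rabs (mu - x * uc) ^ 3.
Proof.
  intros Hx Ha Hc Hasy Htan Hw.
  assert (Hgap : x * ((uc + tan uc) - (ua + tan ua)) = tan (mu - x * uc) - (mu - x * uc)).
  { rewrite Hasy, <- Htan. field. lra. }
  pose proof (id_plus_tan_expand ua uc Ha Hc) as Hexp.
  pose proof (Rabs_tan_sub_id _ Hw) as Hcube.
  rewrite <- Hgap, Rabs_mult, (Rabs_pos_eq x) in Hcube by lra.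
  nra.
Qed.

Lemma slow_phase_bound x mu uc : 0 < x < 12/25 -> Rabs mu <= PI * x / 2 ->
  (1/3 < x < 1/2 -> mu = PI/2 - PI * x) -> - (PI/2) < uc < PI/2 ->
  Rabs (mu - x * uc) <= PI * x /\ Rabs (mu - x * uc) <= 11/10.
Proof.
  intros Hx Hmu Hmid Hu. pose proof PI_gt_3. pose proof PI_lt_16_5.
  assert (Hxu : Rabs (x * uc) <= PI * x / 2).
  { rewrite Rabs_mult, Rabs_pos_eq by lra.
    assert (Rabs uc <= PI / 2) by (apply Rabs_le; lra). nra. }
  assert (Hlin : Rabs (mu - x * uc) <= PI * x).
  { eapply Rle_trans; [apply Rabs_triang|]. rewrite Rabs_Ropp. lra. }
  split; [exact Hlin|].
  (* beyond x = 1/3 the bound pi x is too weak, but there mu is explicit (k = 1) *)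
  destruct (Rle_or_lt x (1/3)) as [h|h]; [nra|].
  rewrite (Hmid ltac:(lra)).
  assert (- (x * (PI/2)) <= x * uc <= x * (PI/2)) by (split; nra).
  apply Rabs_le. split; nra.
Qed.

Lemma node_shift_bound x mu ua uc : 0 < x < 1 -> Rabs mu <= PI * x / 2 ->
  (1/3 < x < 1/2 -> mu = PI/2 - PI * x) ->
  - (PI/2) < ua < PI/2 -> - (PI/2) < uc < PI/2 ->
  ua + tan ua = mu / x ->
  cos uc * sin (mu - x * uc) = x * sin uc * cos (mu - x * uc) ->
  Rabs (uc - ua) <= PI ^ 3 * x ^ 2 / 2.
Proof.
  intros Hx Hmu Hmid Ha Hc Hasy Heq. pose proof PI_gt_3.
  destruct (Rle_or_lt (12/25) x) as [Hbig|Hsmall].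
  - assert (Rabs (uc - ua) < PI) by (apply Rabs_def1; lra).
    assert (Hpx : 36/25 <= PI * x) by nra.
    assert (2 <= PI ^ 2 * x ^ 2) by nra.
    nra.
  - destruct (slow_phase_bound x mu uc ltac:(lra) Hmu Hmid Hc) as [Hlin Hsmallw].
    set (w := mu - x * uc) in *.
    assert (Hcw : 0 < cos w) by (apply cos_gt_0; pose proof (Rle_abs w); pose proof (Rle_abs (- w)); rewrite Rabs_Ropp in *; lra).
    assert (Hcu : 0 < cos uc) by (apply cos_gt_0; lra).
    assert (Htan : x * tan uc = tan w) by (unfold tan; field_simplify_eq; lra).
    pose proof (root_error_le_cube x mu ua uc ltac:(lra) Ha Hc Hasy Htan Hsmallw) as Hcube.
    fold w in Hcube.
    assert (Rabs w ^ 3 <= (PI * x) ^ 3) by (apply pow_incr; split; [apply Rabs_pos|lra]).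
    apply Rmult_le_reg_r with (2 * x); [lra|].
    replace (PI ^ 3 * x ^ 2 / 2 * (2 * x)) with ((PI * x) ^ 3) by field. lra.
Qed.

Lemma round_dist y : Rabs (y - IZR (round y)) <= 1/2.
Proof.
  unfold round. destruct (base_Int_part (y + / 2)). apply Rabs_le. lra.
Qed.

Lemma round_eq_1 y : 1/2 <= y < 3/2 -> round y = 1%Z.
Proof. intros Hy. unfold round. symmetry. apply Int_part_spec. simpl. lra. Qed.

Lemma slow_detuning_bound x : 0 < x ->
  Rabs (PI / 2 - IZR (round (1 / (2 * x))) * PI * x) <= PI * x / 2.
Proof.
  intros Hx. pose proof PI_gt_3. pose proof (round_dist (1 / (2 * x))) as Hr.
  replace (PI / 2 - IZR (round (1 / (2 * x))) * PI * x)
    with (PI * x * (1 / (2 * x) - IZR (round (1 / (2 * x))))) by (field; lra).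
  assert (Hpx : 0 < PI * x) by (apply Rmult_lt_0_compat; lra).
  rewrite Rabs_mult, (Rabs_pos_eq (PI * x)) by lra. nra.
Qed.

Lemma slow_detuning_mid x : 1/3 < x < 1/2 ->
  PI / 2 - IZR (round (1 / (2 * x))) * PI * x = PI / 2 - PI * x.
Proof.
  intros Hx. rewrite round_eq_1; [simpl; ring|].
  assert (Hy : 1 / (2 * x) = 1 + (1 - 2 * x) / (2 * x)) by (field; lra).
  assert (0 < (1 - 2 * x) / (2 * x) < 1/2); [|lra].
  split; [apply Rdiv_lt_0_compat; lra|].
  apply Rmult_lt_reg_r with (2 * x); [lra|]. field_simplify; lra.
Qed.

Lemma qdot_eq_0 rho0 tau sigma th : rho0 <> 0 -> (0 < sigma)%nat -> (0 < tau)%nat ->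
  qdot rho0 tau sigma th = 0 ->
  INR tau * cos (INR tau * th) + INR sigma * cos (INR sigma * th) = 0.
Proof.
  intros Hrho Hs Ht Hq.
  assert (HS : 0 < INR sigma) by (apply lt_0_INR; lia).
  assert (HT : 0 < INR tau) by (apply lt_0_INR; lia).
  unfold qdot in Hq. apply Rmult_integral in Hq as [Hq|Hq]; [contradiction|].
  rewrite (sqrt_div_alt _ _ HS), (sqrt_div_alt _ _ HT) in Hq.
  assert (hs : 0 < sqrt (INR sigma)) by (apply sqrt_lt_R0; lra).
  assert (ht : 0 < sqrt (INR tau)) by (apply sqrt_lt_R0; lra).
  assert (E : sqrt (INR tau) * sqrt (INR sigma) *
      (sqrt (INR tau) / sqrt (INR sigma) * cos (INR tau * th) +
       sqrt (INR sigma) / sqrt (INR tau) * cos (INR sigma * th)) =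
      sqrt (INR tau) * sqrt (INR tau) * cos (INR tau * th) +
      sqrt (INR sigma) * sqrt (INR sigma) * cos (INR sigma * th)) by (field; lra).
  rewrite Hq, Rmult_0_r, !sqrt_sqrt in E by lra. lra.
Qed.

Lemma weighted_cos_sum p q th :
  p * cos (p * th) + q * cos (q * th) =
  (p + q) * cos ((p + q) / 2 * th) * cos ((p - q) / 2 * th)
  - (p - q) * sin ((p + q) / 2 * th) * sin ((p - q) / 2 * th).
Proof.
  replace (p * th) with ((p + q) / 2 * th + (p - q) / 2 * th) by field.
  replace (q * th) with ((p + q) / 2 * th - (p - q) / 2 * th) by field.
  rewrite cos_plus, cos_minus. ring.
Qed.

Lemma sin_k_PI k : sin (IZR k * PI) = 0.
Proof. apply sin_eq_0_1. now exists k. Qed.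

Lemma cos_k_PI_neq_0 k : cos (IZR k * PI) <> 0.
Proof. intros H. pose proof (sin2_cos2 (IZR k * PI)). rewrite sin_k_PI, H in H0.
  unfold Rsqr in H0. lra. Qed.

Lemma slow_node_equation p q x th k uc mu : 0 < p + q -> p - q = x * (p + q) ->
  p * cos (p * th) + q * cos (q * th) = 0 ->
  (p + q) / 2 * th = IZR k * PI + uc -> mu = PI / 2 - IZR k * PI * x ->
  cos uc * sin (mu - x * uc) = x * sin uc * cos (mu - x * uc).
Proof.
  intros Hpq Hx Hsum Hphi Hmu.
  assert (Hpsi : (p - q) / 2 * th = PI / 2 - (mu - x * uc)).
  { replace ((p - q) / 2 * th) with (x * ((p + q) / 2 * th)) by (rewrite Hx; field).
    rewrite Hphi, Hmu. ring. }
  rewrite weighted_cos_sum, Hpsi, Hphi, cos_shift, sin_shift, cos_plus, sin_plus,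
    sin_k_PI, Hx in Hsum.
  pose proof (cos_k_PI_neq_0 k).
  apply Rmult_eq_reg_l with ((p + q) * cos (IZR k * PI)).
  - lra.
  - apply Rmult_integral_contrapositive; lra.
Qed.

Theorem theorem4 (tau sigma : nat) (rho0 : R) :
  (0 < sigma)%nat -> (sigma < tau)%nat -> Nat.gcd tau sigma = 1%nat ->
  ((tau - sigma) mod 4 <> 2)%nat -> rho0 <> 0 ->
  let a := INR (tau + sigma) in
  let b := INR (tau - sigma) in
  let x := b / a in
  let k := round (1 / (2 * x)) in
  let mu := PI / 2 - IZR k * PI * x in
  let s := mu / x in
  forall u_asy : R, - (PI / 2) < u_asy < PI / 2 -> u_asy + tan u_asy = s ->
  let theta_asy := PI / b + 2 / a * (u_asy - s) in
  forall theta_c u_c : R, - (PI / 2) < u_c < PI / 2 ->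
  a / 2 * theta_c = IZR k * PI + u_c ->
  qdot rho0 tau sigma theta_c = 0 ->
  Rabs (theta_c - theta_asy) <= PI ^ 3 / a * x ^ 2 /\
  PI ^ 3 / a * x ^ 2 = PI ^ 3 * (b ^ 2 / a ^ 3).
Proof.
  intros Hs Hst _ _ Hrho a b x k mu s ua Hua Hasy theta_asy th uc Huc Hth Hq.
  assert (HTS : 0 < INR sigma < INR tau) by (split; [apply lt_0_INR|apply lt_INR]; lia).
  assert (Ha : a = INR tau + INR sigma) by apply plus_INR.
  assert (Hb : b = INR tau - INR sigma) by (apply minus_INR; lia).
  assert (Hx : 0 < x < 1).
  { unfold x. split; [apply Rdiv_lt_0_compat; lra|].
    apply Rmult_lt_reg_r with a; [lra|]. unfold Rdiv. rewrite Rmult_assoc, Rinv_l; lra. }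
  assert (Hnode : cos uc * sin (mu - x * uc) = x * sin uc * cos (mu - x * uc)).
  { apply (slow_node_equation (INR tau) (INR sigma) x th k); try lra.
    - unfold x. rewrite <- Ha, <- Hb. field. lra.
    - now apply (qdot_eq_0 rho0); try lia.
    - now rewrite <- Ha.
    - reflexivity. }
  pose proof (node_shift_bound x mu ua uc Hx (slow_detuning_bound x ltac:(lra))
                (slow_detuning_mid x) Hua Huc Hasy Hnode) as Hshift.
  assert (Hdiff : th - theta_asy = 2 / a * (uc - ua)).
  { unfold theta_asy, s, mu, x. replace th with (2 / a * (IZR k * PI + uc))
      by (rewrite <- Hth; field; lra).
    field. lra. }
  split.
  - rewrite Hdiff, Rabs_mult, Rabs_pos_eq by (apply Rlt_le, Rdiv_lt_0_compat; lra).
    replace (PI ^ 3 / a * x ^ 2) with (2 / a * (PI ^ 3 * x ^ 2 / 2)) by (field; lra).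
    apply Rmult_le_compat_l; [apply Rlt_le, Rdiv_lt_0_compat; lra | exact Hshift].
  - unfold x. field. lra.
Qed.
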